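(* For every real $x\notin\mathbb Z$, $$\csc^2(\pi x)+|\cot(\pi x)\csc(\pi x)|\leqslant \tfrac14\|x\|^{-2}$$ and $$|\cot(\pi x)\csc(\pi x)|\leqslant \pi^{-2}\|x\|^{-2}.$$
   Context: For real $\theta$, $\|\theta\|=\min_{n\in\mathbb Z}|\theta-n|$ denotes the distance from $\theta$ to the nearest integer. *)

From Stdlib Require Import Reals.
Open Scope R_scope.

(* ||x|| = min_{n in Z} |x - n|, the distance from x to the nearest integer.
   Here up x is the least integer strictly greater than x, so up x - 1 = floor x;
   the nearest integer is either floor x or floor x + 1. *)
Definition dist_Z (x : R) : R :=
  Rmin (x - IZR (up x - 1)) (IZR (up x) - x).

Definition csc (x : R) : R := / sin x.
Definition cot (x : R) : R := cos x / sin x.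

(* Let [t = dist_Z x], so [0 < t <= 1/2]. Since [cos (2 PI x) = cos (2 PI t)], we have
   [sin (PI x)^2 = sin (PI t)^2] and [|cos (PI x)| = cos (PI t)], so the two left-hand sides
   are [(1 + cos (PI t)) / sin (PI t)^2 = 1 / (1 - cos (PI t))] and [cos (PI t) / sin (PI t)^2].
   The claims thus reduce to [4 t^2 <= 1 - cos (PI t)] and [u^2 cos u <= sin u^2] for
   [u = PI t] in [(0, PI/2]], which follow from the low-order Taylor bounds on [sin] and [cos]
   together with [3 <= PI <= 3.2]. *)

From Stdlib Require Import Reals Lra Lia Psatz ZArith.
Open Scope R_scope.

Lemma cos_le_taylor4 a : - PI / 2 <= a <= PI / 2 -> cos a <= 1 - a ^ 2 / 2 + a ^ 4 / 24.
Proof.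
  intros [ha hb].
  replace (1 - a ^ 2 / 2 + a ^ 4 / 24) with (cos_approx a 2)
    by (unfold cos_approx, cos_term; simpl; field).
  exact (proj2 (cos_bound a 0 ha hb)).
Qed.

Lemma sin_ge_taylor3 a : 0 <= a <= PI -> a - a ^ 3 / 6 <= sin a.
Proof.
  intros [ha hb].
  replace (a - a ^ 3 / 6) with (sin_approx a 1)
    by (unfold sin_approx, sin_term; simpl; field).
  exact (proj1 (sin_bound a 0 ha hb)).
Qed.

(* Otherwise [1.6 < PI / 2], and then the Taylor bound makes [cos 1.6] negative. *)
Lemma PI_le_3_2 : PI <= 3.2.
Proof.
  destruct (Rle_lt_dec PI 3.2) as [h | h]; [exact h | exfalso].
  assert (cos_pos : 0 < cos 1.6) by (apply cos_gt_0; lra).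
  assert (cos_bnd := cos_le_taylor4 1.6 ltac:(lra)).
  lra.
Qed.

Lemma sqr_mul_cos_le_sin_sqr u : 0 <= u <= PI / 2 -> u ^ 2 * cos u <= sin u ^ 2.
Proof.
  intros [h0 h1]. pose proof PI_4.
  assert (hc := cos_le_taylor4 u ltac:(lra)).
  assert (hs := sin_ge_taylor3 u ltac:(lra)).
  assert (u_sqr_le : u * u <= 4) by nra.
  assert (taylor_pos : 0 <= u - u ^ 3 / 6) by nra.
  assert ((u - u ^ 3 / 6) ^ 2 <= sin u ^ 2) by (apply pow_incr; lra).
  (* [(u - u^3/6)^2 - u^2 (1 - u^2/2 + u^4/24) = u^4 (12 - u^2) / 72] *)
  assert (u ^ 2 * cos u <= u ^ 2 * (1 - u ^ 2 / 2 + u ^ 4 / 24))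
    by (apply Rmult_le_compat_l; nra).
  nra.
Qed.

Lemma four_sqr_le_one_sub_cos_PI t : 0 <= t <= 1 / 2 -> 4 * t ^ 2 <= 1 - cos (PI * t).
Proof.
  intros [h0 h1]. pose proof PI_le_3_2. pose proof PI2_3_2.
  destruct (Rle_lt_dec t 0.3) as [small | large].
  - assert (hc := cos_le_taylor4 (PI * t) ltac:(nra)).
    assert (PI ^ 2 * t ^ 2 <= 3.2 ^ 2 * 0.09) by
      (apply Rmult_le_compat; try nra; apply pow_le; lra).
    assert (0 <= t ^ 2 * (PI ^ 2 / 2 - PI ^ 2 * (PI ^ 2 * t ^ 2) / 24 - 4))
      by (apply Rmult_le_pos; nra).
    nra.
  - (* Near [1/2] use [cos (PI t) = sin (PI (1/2 - t)) <= PI (1/2 - t)] instead. *)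
    set (y := 1 / 2 - t).
    replace (PI * t) with (PI / 2 - PI * y) by (unfold y; field).
    rewrite cos_shift.
    replace t with (1 / 2 - y) by (unfold y; ring).
    assert (sin_le : sin (PI * y) <= PI * y).
    { destruct (Req_dec y 0) as [e | e].
      - rewrite e, Rmult_0_r, sin_0. lra.
      - left. apply sin_lt_x. unfold y in *. nra. }
    unfold y in *. nra.
Qed.

Lemma cos_period_Z x k : cos (x + 2 * IZR k * PI) = cos x.
Proof.
  destruct (Z.le_ge_cases 0 k) as [hk | hk].
  - rewrite <- (Z2Nat.id k hk), <- INR_IZR_INZ. apply cos_period.
  - replace k with (- Z.of_nat (Z.to_nat (- k)))%Z by lia.
    rewrite opp_IZR, <- INR_IZR_INZ.
    rewrite <- (cos_period (x + 2 * - INR (Z.to_nat (- k)) * PI) (Z.to_nat (- k))).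
    f_equal. ring.
Qed.

Lemma dist_Z_frac x :
  0 <= x - IZR (up x - 1) < 1 /\
  dist_Z x = Rmin (x - IZR (up x - 1)) (1 - (x - IZR (up x - 1))).
Proof.
  destruct (archimed x) as [gt le]. rewrite minus_IZR.
  unfold dist_Z. rewrite minus_IZR.
  split; [lra | f_equal; ring].
Qed.

Lemma dist_Z_le_half x : dist_Z x <= 1 / 2.
Proof.
  destruct (dist_Z_frac x) as [_ ->]. unfold Rmin. destruct Rle_dec; lra.
Qed.

Lemma dist_Z_pos x : (forall n : Z, x <> IZR n) -> 0 < dist_Z x.
Proof.
  intros not_int. destruct (dist_Z_frac x) as [[f0 f1] ->].
  assert (x - IZR (up x - 1) <> 0) by (intro e; apply (not_int (up x - 1)%Z); lra).
  unfold Rmin. destruct Rle_dec; lra.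
Qed.

Lemma cos_2PI_dist_Z x : cos (2 * (PI * x)) = cos (2 * (PI * dist_Z x)).
Proof.
  destruct (dist_Z_frac x) as [_ ->].
  set (f := x - IZR (up x - 1)).
  replace (2 * (PI * x)) with (2 * (PI * f) + 2 * IZR (up x - 1) * PI)
    by (unfold f; ring).
  rewrite cos_period_Z. unfold Rmin. destruct Rle_dec; [reflexivity |].
  replace (2 * (PI * f)) with (- (2 * (PI * (1 - f))) + 2 * INR 1 * PI) by (simpl; ring).
  rewrite cos_period, cos_neg. reflexivity.
Qed.

Lemma sin_sqr_eq_of_cos_double a b : cos (2 * a) = cos (2 * b) -> sin a ^ 2 = sin b ^ 2.
Proof. rewrite !cos_2a_sin. intros e. nra. Qed.

Lemma Rabs_cos_eq_of_cos_double a b : cos (2 * a) = cos (2 * b) -> Rabs (cos a) = Rabs (cos b).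
Proof. rewrite !cos_2a_cos. intros e. apply Rsqr_eq_abs_0. unfold Rsqr. nra. Qed.

Lemma one_add_cos_div_sin_sqr_PI_le t :
  0 < t <= 1 / 2 -> (1 + cos (PI * t)) / sin (PI * t) ^ 2 <= / 4 * / t ^ 2.
Proof.
  intros [t0 t1]. pose proof PI2_3_2.
  assert (key := four_sqr_le_one_sub_cos_PI t ltac:(lra)).
  assert (pyth := sin2_cos2 (PI * t)). unfold Rsqr in pyth.
  assert (cos_lt_1 : cos (PI * t) < 1) by nra.
  replace ((1 + cos (PI * t)) / sin (PI * t) ^ 2) with (/ (1 - cos (PI * t))).
  - rewrite <- Rinv_mult. apply Rinv_le_contravar; nra.
  - assert (0 < sin (PI * t)) by (apply sin_gt_0; nra).
    assert (0 <= 1 + cos (PI * t)) by (pose proof COS_bound (PI * t); lra).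
    field_simplify_eq; [nra | lra].
Qed.

Lemma cos_div_sin_sqr_PI_le t :
  0 < t <= 1 / 2 -> cos (PI * t) / sin (PI * t) ^ 2 <= / PI ^ 2 * / t ^ 2.
Proof.
  intros [t0 t1]. pose proof PI2_3_2.
  assert (key := sqr_mul_cos_le_sin_sqr (PI * t) ltac:(split; nra)).
  assert (0 < sin (PI * t)) by (apply sin_gt_0; nra).
  rewrite <- Rinv_mult, <- Rpow_mult_distr.
  set (u := PI * t) in *.
  assert (u_pos : 0 < u) by (unfold u; nra).
  apply Rmult_le_reg_r with (u ^ 2 * sin u ^ 2).
  { apply Rmult_lt_0_compat; apply pow_lt; lra. }
  replace (cos u / sin u ^ 2 * (u ^ 2 * sin u ^ 2)) with (u ^ 2 * cos u) by (field; lra).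
  replace (/ u ^ 2 * (u ^ 2 * sin u ^ 2)) with (sin u ^ 2) by (field; lra).
  exact key.
Qed.

Lemma Rabs_cot_mul_csc y :
  sin y <> 0 -> Rabs (cot y * csc y) = Rabs (cos y) / sin y ^ 2.
Proof.
  intros sin_nz. unfold cot, csc.
  replace (cos y / sin y * / sin y) with (cos y / sin y ^ 2) by (field; exact sin_nz).
  unfold Rdiv. rewrite Rabs_mult, (Rabs_pos_eq (/ _)); [reflexivity |].
  left. apply Rinv_0_lt_compat. simpl. rewrite Rmult_1_r.
  destruct (Rdichotomy _ _ sin_nz); nra.
Qed.

Theorem lemma1 : forall x : R, (forall n : Z, x <> IZR n) ->
  (csc (PI * x))^2 + Rabs (cot (PI * x) * csc (PI * x)) <= / 4 * / (dist_Z x)^2 /\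
  Rabs (cot (PI * x) * csc (PI * x)) <= / (PI^2) * / (dist_Z x)^2.
Proof.
  intros x not_int.
  assert (t_bounds : 0 < dist_Z x <= 1 / 2) by exact (conj (dist_Z_pos x not_int) (dist_Z_le_half x)).
  assert (double := cos_2PI_dist_Z x).
  set (t := dist_Z x) in *.
  pose proof PI2_3_2.
  assert (sin_pos : 0 < sin (PI * t)) by (apply sin_gt_0; nra).
  assert (cos_nonneg : 0 <= cos (PI * t)) by (apply cos_ge_0; nra).
  assert (sin_sqr := sin_sqr_eq_of_cos_double _ _ double).
  assert (sin_nz : sin (PI * x) <> 0) by (intro e; rewrite e in sin_sqr; nra).
  unfold csc at 1.
  rewrite pow_inv, Rabs_cot_mul_csc, sin_sqr, (Rabs_cos_eq_of_cos_double _ _ double),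
    Rabs_pos_eq by assumption.
  split.
  - replace (/ sin (PI * t) ^ 2 + cos (PI * t) / sin (PI * t) ^ 2)
      with ((1 + cos (PI * t)) / sin (PI * t) ^ 2) by (field; lra).
    exact (one_add_cos_div_sin_sqr_PI_le t t_bounds).
  - exact (cos_div_sin_sqr_PI_le t t_bounds).
Qed.
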